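(* The map $f:\mathbb{C}H^n\to\mathbb{C}^n$ given by $$f(z_1,\dots,z_n)=\left(\frac{z_1}{\sqrt{1-\sum_{i=1}^n|z_i|^2}},\dots,\frac{z_n}{\sqrt{1-\sum_{i=1}^n|z_i|^2}}\right)$$ is a special global diffeomorphism satisfying $f^*(\omega_0)=\omega_{hyp}$ and $f^*(\omega_{FS})=\omega_0$, where in the second equation $\omega_0$ denotes the restriction of the flat form to $\mathbb{C}H^n\subset\mathbb{C}^n$ and $\omega_{FS}$ is the restriction of the Fubini–Study form to the affine chart $\mathbb{C}^n=\{Z_0\neq0\}\subset\mathbb{C}P^n$.
   Context: $\mathbb{C}H^n=\{z\in\mathbb{C}^n:\sum_j|z_j|^2<1\}$ with $\omega_{hyp}=-\frac{i}{2}\partial\bar\partial\log(1-\sum_j|z_j|^2)$; $\omega_0=\frac{i}{2}\sum_j dz_j\wedge d\bar z_j$; on the affine chart $Z_0\neq0$ of $\mathbb{C}P^n$ with coordinates $z_j=Z_j/Z_0$, $\omega_{FS}=\frac{i}{2}\partial\bar\partial\log(1+\sum_j|z_j|^2)$. A smooth map $\Psi$ between domains of $\mathbb{C}^n$ is called special if it has the form $\Psi(z)=(\tilde\psi_1(x)z_1,\dots,\tilde\psi_n(x)z_n)$ with $x_j=|z_j|^2$ and $\tilde\psi_j$ real-valued functions of $x=(x_1,\dots,x_n)$. *)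

From HB Require Import structures.
From mathcomp Require Import all_boot all_order all_algebra.
From mathcomp Require Import all_classical all_reals all_analysis.
From mathcomp Require Import complex.
Set Implicit Arguments. Unset Strict Implicit. Unset Printing Implicit Defensive.
Import Order.TTheory GRing.Theory Num.Theory ComplexField.
Import numFieldNormedType.Exports.
Local Open Scope classical_set_scope.
Local Open Scope ring_scope.
Local Open Scope complex_scope.

(* C^n as a real normed space: z = (x, y) with z_j = x_j + i y_j *)
Definition Cn (R : realType) (n : nat) := ('rV[R]_n * 'rV[R]_n)%type.

Section Defs.
Variables (R : realType) (n : nat).
Local Notation V := (Cn R n).

Definition re_ (z : V) (j : 'I_n) : R := z.1 ord0 j.
Definition im_ (z : V) (j : 'I_n) : R := z.2 ord0 j.
Definition zc (z : V) (j : 'I_n) : R[i] := (re_ z j) +i* (im_ z j).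
Definition absq (z : V) : 'rV[R]_n := \row_j (re_ z j ^+ 2 + im_ z j ^+ 2).
Definition normsq (z : V) : R := \sum_j (re_ z j ^+ 2 + im_ z j ^+ 2).

(* complex hyperbolic space: the unit ball *)
Definition CHn : set V := [set z | normsq z < 1].

Definition ex (j : 'I_n) : V := (delta_mx 0 j, 0).
Definition ey (j : 'I_n) : V := (0, delta_mx 0 j).

(* Wirtinger mixed second derivative d^2 phi / dz_j dzbar_k, with
   d/dz = (d/dx - i d/dy)/2 and d/dzbar = (d/dx + i d/dy)/2 *)
Definition wirt2 (phi : V -> R) (j k : 'I_n) (z : V) : R[i] :=
  ((4%:R)^-1)%:C *
  ((('D_(ex j) ('D_(ex k) phi) z + 'D_(ey j) ('D_(ey k) phi) z))
     +i* ('D_(ex j) ('D_(ey k) phi) z - 'D_(ey j) ('D_(ex k) phi) z)).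

(* real 2-forms on (an open set of) C^n: point -> tangent -> tangent -> R *)
Definition form2 := V -> V -> V -> R.

Definition dzdzb (j k : 'I_n) (u v : V) : R[i] :=
  zc u j * (zc v k)^* - zc v j * (zc u k)^*.

Definition i2ddbar (phi : V -> R) : form2 := fun z u v =>
  complex.Re ((2%:R)^-1 * 'i * \sum_j \sum_k wirt2 phi j k z * dzdzb j k u v).

Definition omega0 : form2 := fun _ u v =>
  complex.Re ((2%:R)^-1 * 'i * \sum_j dzdzb j j u v).

Definition omega_hyp : form2 := fun z u v =>
  - i2ddbar (fun w => ln (1 - normsq w)) z u v.

(* omega_FS on the affine chart Z_0 <> 0: (i/2) ddbar log(1 + sum |z_j|^2) *)
Definition omega_FS : form2 := fun z u v =>
  i2ddbar (fun w => ln (1 + normsq w)) z u v.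

Definition pullback (f : V -> V) (om : form2) : form2 := fun z u v =>
  om (f z) ('d f z u) ('d f z v).

Fixpoint iter_D (vs : seq V) (g : V -> V) : V -> V :=
  match vs with
  | [::] => g
  | v :: vs' => fun x => 'D_v (iter_D vs' g) x
  end.

Definition smooth_on (U : set V) (g : V -> V) : Prop :=
  forall (vs : seq V) (x : V), U x -> differentiable (iter_D vs g) x.

Definition diffeo_onto (U W : set V) (f : V -> V) : Prop :=
  smooth_on U f /\
  exists g : V -> V, smooth_on W g /\
    (forall z, U z -> W (f z) /\ g (f z) = z) /\
    (forall w, W w -> U (g w) /\ f (g w) = w).

(* special map on U: Psi(z) = (psi_1(x) z_1, ..., psi_n(x) z_n), x_j = |z_j|^2,
   psi_j real-valued *)
Definition special_on (U : set V) (f : V -> V) : Prop :=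
  exists psi : 'I_n -> 'rV[R]_n -> R,
    forall z, U z -> forall j,
      re_ (f z) j = psi j (absq z) * re_ z j /\
      im_ (f z) j = psi j (absq z) * im_ z j.

Definition fball (z : V) : V :=
  ((Num.sqrt (1 - normsq z))^-1 *: z.1, (Num.sqrt (1 - normsq z))^-1 *: z.2).

End Defs.

(* f and its inverse w / sqrt(1 + |w|^2) are radial rescalings z / sqrt(c + e|z|^2),
   smooth where c + e|z|^2 > 0 since every derivative of t^(-1/2) is a multiple of an
   odd power of t^(-1/2); the differential of such a map is
   u |-> r u - e r^3 <z,u> z with r = (c + e|z|^2)^(-1/2).
   For phi = log(c + e|z|^2) the real Hessian has the shape a <u,v> + b <z,u><z,v>, and
   for such a Hessian the Wirtinger double sum in (i/2) ddbar phi factors through the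
   hermitian product, giving a omega_0 / 2 + b (<z,p> omega_0(z,q) - omega_0(z,p) <z,q>) / 4.
   Both pullback identities then reduce to rational identities in r, r^2 = 1 / (1 - |z|^2).
   Below, <.,.> is [dotV] and omega_0 in real coordinates is [symp]. *)

From HB Require Import structures.
From mathcomp Require Import all_boot all_order all_algebra.
From mathcomp Require Import all_classical all_reals all_analysis.
From mathcomp Require Import ring.
From mathcomp Require Import complex.
Import Order.TTheory GRing.Theory Num.Theory ComplexField.
Import numFieldNormedType.Exports.
Local Open Scope classical_set_scope.
Local Open Scope ring_scope.
Set Implicit Arguments. Unset Strict Implicit. Unset Printing Implicit Defensive.

Section LocalDifferentiability.
Variables (R : realType) (V W : normedModType R).

Lemma differentiable_near0 (h : V -> W) x :
  (\forall y \near x, h y = 0) -> differentiable h x.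
Proof.
move=> hx; have hx0 : h x = 0 by apply: (nbhs_singleton hx).
have c0 := differentiable_cst (0 : W) x.
have E : h \o shift x = cst (h x) + 'd (cst (0 : W)) x +o_ 0 id.
  rewrite diff_cst hx0; apply/eqaddoP => e e0.
  have : \forall y \near (0 : V), h (y + x) = 0.
    by rewrite (near_shift x) /=; near=> y; rewrite /= sub0r subrK; near: y.
  apply: filterS => y /= hy.
  change (`|h (y + x) - (0 + 0)| <= e * `|y|).
  by rewrite hy addr0 subrr normr0 mulr_ge0 // ltW.
have D := diff_unique (diff_continuous c0) E.
by apply/diff_locallyP; rewrite D; split=> //; exact: diff_continuous c0.
Unshelve. all: by end_near.
Qed.

Lemma near_eq_differentiable (f g : V -> W) x :
  (\forall y \near x, f y = g y) -> differentiable f x -> differentiable g x.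
Proof.
move=> fg df; have -> : g = f + (g - f) by apply/funext => y /=; rewrite addrC subrK.
apply: differentiableD => //; apply: differentiable_near0.
by apply: filterS fg => y /= fgy; change (g y - f y = 0); rewrite fgy subrr.
Qed.

End LocalDifferentiability.

Section FiniteSmoothness.
Variables (R : realType) (V : normedModType R) (U : set V).
Hypothesis oU : open U.

(* Orders are shifted by one: [Ck_on U 0 g] is differentiability of [g] on [U]. *)
Fixpoint Ck_on {W : normedModType R} (k : nat) (g : V -> W) : Prop :=
  match k with
  | 0 => forall x, U x -> differentiable g x
  | k'.+1 => (forall x, U x -> differentiable g x) /\ forall v, Ck_on k' ('D_v g)
  end.

Lemma Ck_on_differentiable {W : normedModType R} k (g : V -> W) x :
  Ck_on k g -> U x -> differentiable g x.
Proof. by case: k => [|k] /= => [dg|[dg _]]; apply: dg. Qed.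

Lemma Ck_onS {W : normedModType R} k (g : V -> W) : Ck_on k.+1 g -> Ck_on k g.
Proof. by elim: k g => [|k IH] g /= [dg Dg] //; split=> // v; apply: IH. Qed.

Lemma Ck_on_eq {W : normedModType R} k (g1 g2 : V -> W) :
  (forall x, U x -> g1 x = g2 x) -> Ck_on k g1 -> Ck_on k g2.
Proof.
have nearU x : U x -> \forall y \near x, U y.
  by move=> Ux; move: oU; rewrite openE => /(_ x Ux).
have diff_eq (h1 h2 : V -> W) : (forall x, U x -> h1 x = h2 x) ->
    (forall x, U x -> differentiable h1 x) -> forall x, U x -> differentiable h2 x.
  move=> e d x Ux; apply: near_eq_differentiable (d x Ux).
  by apply: filterS (nearU x Ux) => y /e.
elim: k g1 g2 => [|k IH] g1 g2 e /=; first exact: diff_eq.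
move=> [d1 D1]; split; first exact: diff_eq d1.
move=> v; apply: IH (D1 v) => x Ux; apply: near_eq_derive.
by apply: filterS (nearU x Ux) => y /e.
Qed.

Lemma Ck_on_cst {W : normedModType R} k (c : W) : Ck_on k (cst c).
Proof.
elim: k c => [|k IH] c /=; first by move=> x _; apply: differentiable_cst.
split=> [x _|v]; first exact: differentiable_cst.
by have -> : 'D_v (cst c) = cst (0 : W) by apply/funext => x; apply: derive_cst.
Qed.

Lemma Ck_onD {W : normedModType R} k (f g : V -> W) :
  Ck_on k f -> Ck_on k g -> Ck_on k (f + g).
Proof.
elim: k f g => [|k IH] f g /=; first by move=> df dg x Ux; apply: differentiableD; auto.
move=> [df Df] [dg Dg]; split=> [x Ux|v]; first by apply: differentiableD; auto.
apply: Ck_on_eq (IH _ _ (Df v) (Dg v)) => x Ux.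
by rewrite /= deriveD //; apply: diff_derivable; auto.
Qed.

Lemma Ck_on_sum {W : normedModType R} k (I : finType) (f : I -> V -> W) :
  (forall i, Ck_on k (f i)) -> Ck_on k (\sum_i f i).
Proof. by move=> Cf; elim/big_ind: _ => //; [exact: Ck_on_cst | exact: Ck_onD]. Qed.

Lemma Ck_onM k (f g : V -> R) : Ck_on k f -> Ck_on k g -> Ck_on k (f * g).
Proof.
elim: k f g => [|k IH] f g /=; first by move=> df dg x Ux; apply: differentiableM; auto.
move=> [df Df] [dg Dg]; split=> [x Ux|v]; first by apply: differentiableM; auto.
have Ck_f : Ck_on k f by apply: Ck_onS; split.
have Ck_g : Ck_on k g by apply: Ck_onS; split.
apply: Ck_on_eq (Ck_onD (IH _ _ Ck_f (Dg v)) (IH _ _ Ck_g (Df v))) => x Ux.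
by rewrite /= deriveM //; apply: diff_derivable; auto.
Qed.

Lemma derive_comp1 (h : R -> R) (g : V -> R) x v :
  differentiable g x -> derivable h (g x) 1 ->
  'D_v (h \o g) x = 'D_1 h (g x) * 'D_v g x.
Proof.
move=> dg /derivable1_diffP dh.
rewrite deriveE; last exact: differentiable_comp.
by rewrite diff_comp // /= (deriveE _ dg) diff1E // derive1E mulrC.
Qed.

Lemma Ck_on_comp (I : set R) k (hs : nat -> R -> R) (g : V -> R) :
  (forall m t, I t -> derivable (hs m) t 1 /\ 'D_1 (hs m) t = hs m.+1 t) ->
  (forall x, U x -> I (g x)) -> Ck_on k g -> Ck_on k (hs 0%N \o g).
Proof.
have diff_comp (h : nat -> R -> R) f :
    (forall m t, I t -> derivable (h m) t 1 /\ 'D_1 (h m) t = h m.+1 t) ->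
    (forall x, U x -> I (f x)) -> (forall x, U x -> differentiable f x) ->
    forall x, U x -> differentiable (h 0%N \o f) x.
  move=> Hh If df x Ux; apply: differentiable_comp; first exact: df.
  by apply/derivable1_diffP; case: (Hh 0%N (f x) (If x Ux)).
elim: k hs g => [|k IH] hs g Hh Ig /=; first exact: diff_comp.
move=> [dg Dg]; split=> [|v]; first exact: diff_comp.
have Ck_h1g : Ck_on k (hs 1%N \o g).
  by apply: (IH (fun m => hs m.+1)) => //; [move=> m t /Hh | apply: Ck_onS; split].
apply: Ck_on_eq (Ck_onM Ck_h1g (Dg v)) => x Ux.
have [d0 e0] := Hh 0%N (g x) (Ig x Ux).
by rewrite /= derive_comp1 ?e0 //; apply: dg.
Qed.

End FiniteSmoothness.

Section Coordinates.
Variables (R : realType) (n : nat).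
Local Notation V := (Cn R n).

(* [re_] and [im_] indexed by a boolean, so that the 2n real coordinates can be
   quantified over uniformly. *)
Definition rcoord (b : bool) (j : 'I_n) (z : V) : R := (if b then z.1 else z.2) ord0 j.

Lemma rcoord_is_linear b j : linear (rcoord b j).
Proof. by case: b => a u v; rewrite /rcoord /= !mxE. Qed.
HB.instance Definition _ b j :=
  GRing.isLinear.Build R V R _ (rcoord b j) (rcoord_is_linear b j).

Lemma rcoord_continuous b j : continuous (rcoord b j).
Proof.
move=> x; case: b; rewrite /rcoord.
- by apply: (@continuous_comp _ _ _ fst (fun M : 'rV[R]_n => M ord0 j));
    [exact: cvg_fst | exact: coord_continuous].
- by apply: (@continuous_comp _ _ _ snd (fun M : 'rV[R]_n => M ord0 j));
    [exact: cvg_snd | exact: coord_continuous].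
Qed.

Lemma rcoord_differentiable b j x : differentiable (rcoord b j) x.
Proof. exact/linear_differentiable/rcoord_continuous. Qed.

Lemma diff_rcoord b j x : 'd (rcoord b j) x = rcoord b j :> (V -> R).
Proof. exact: diff_lin (@rcoord_continuous b j). Qed.

Lemma derive_rcoord b j x v : 'D_v (rcoord b j) x = rcoord b j v.
Proof. by rewrite deriveE ?diff_rcoord //; exact: rcoord_differentiable. Qed.

Lemma derive_rcoord_comp (F : V -> V) x v b j : differentiable F x ->
  'D_v (rcoord b j \o F) x = rcoord b j ('D_v F x).
Proof.
move=> dF; have dc := rcoord_differentiable b j (F x).
rewrite deriveE; last exact: differentiable_comp.
by rewrite diff_comp // (deriveE _ dF) diff_rcoord.
Qed.

Lemma pair_sum (I : finType) (p : I -> V) :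
  \sum_i p i = (\sum_i (p i).1, \sum_i (p i).2).
Proof.
rewrite [LHS]surjective_pairing; congr pair.
  exact: (raddf_sum (fst : {linear V -> 'rV[R]_n})).
exact: (raddf_sum (snd : {linear V -> 'rV[R]_n})).
Qed.

Lemma rcoord_decomp (w : V) :
  w = \sum_j (rcoord true j w *: ex R j + rcoord false j w *: ey R j).
Proof.
rewrite pair_sum; case: w => a b /=; congr pair.
  rewrite {1}(row_sum_delta a); apply: eq_bigr => j _ /=.
  by rewrite scaler0 addr0.
rewrite {1}(row_sum_delta b); apply: eq_bigr => j _ /=.
by rewrite scaler0 add0r.
Qed.

Lemma rcoordP (p q : V) : (forall b j, rcoord b j p = rcoord b j q) -> p = q.
Proof.
move=> pq; rewrite (rcoord_decomp p) (rcoord_decomp q).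
by apply: eq_bigr => j _; rewrite !pq.
Qed.

Lemma rcoordZ b j (a : R) (u : V) : rcoord b j (a *: u) = a * rcoord b j u.
Proof. by case: b; rewrite /rcoord /= mxE. Qed.

Lemma rcoord_comb b j (a c : R) (u w : V) :
  rcoord b j (a *: u + c *: w) = a * rcoord b j u + c * rcoord b j w.
Proof. by case: b; rewrite /rcoord /= !mxE. Qed.

Section Smooth.
Variable U : set V.
Hypothesis oU : open U.

Lemma Ck_on_rcoord k b j : Ck_on U k (rcoord b j).
Proof.
elim: k => [|k IH] /=; first by move=> x _; apply: rcoord_differentiable.
split=> [x _|v]; first exact: rcoord_differentiable.
have -> : 'D_v (rcoord b j) = cst (rcoord b j v).
  by apply/funext => x; apply: derive_rcoord.
exact: Ck_on_cst.
Qed.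

Lemma Ck_on_coordwise k (F : V -> V) :
  (forall b j, Ck_on U k (rcoord b j \o F)) -> Ck_on U k F.
Proof.
have diffF (G : V -> V) : (forall b j x, U x -> differentiable (rcoord b j \o G) x) ->
    forall x, U x -> differentiable G x.
  move=> dG x Ux; have -> : G = \sum_j (fun z =>
      rcoord true j (G z) *: ex R j + rcoord false j (G z) *: ey R j).
    by rewrite fct_sumE; apply/funext => z; rewrite {1}(rcoord_decomp (G z)).
  by apply: differentiable_sum => j; apply: differentiableD;
    apply: differentiableZl; exact: dG.
elim: k F => [|k IH] F /= CF; first by apply: diffF => b j; apply: CF.
split=> [|v]; first by apply: diffF => b j x Ux; case: (CF b j) => + _; apply.
apply: IH => b j; case: (CF b j) => _ /(_ v); apply: Ck_on_eq => // x Ux.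
apply: derive_rcoord_comp; apply: diffF => // b' j' y Uy.
by case: (CF b' j') => + _; apply.
Qed.

Lemma Ck_on_iter_D vs k (g : V -> V) :
  Ck_on U (size vs + k) g -> Ck_on U k (iter_D vs g).
Proof.
elim: vs k => [|v vs IH] k //= Cg.
by have := IH k.+1; rewrite addnS => /(_ Cg) /= [_]; apply.
Qed.

Lemma smooth_onP (g : V -> V) : (forall k, Ck_on U k g) -> smooth_on U g.
Proof.
move=> Cg vs x Ux; apply: (@Ck_on_differentiable _ _ U _ 0) Ux.
by apply: Ck_on_iter_D; rewrite addn0.
Qed.

End Smooth.
End Coordinates.

Section InverseSqrt.
Variable R : realType.

Definition rsqrt (t : R) := (Num.sqrt t)^-1.

(* d^m/dt^m t^(-1/2) = c_m t^(-(2m+1)/2) with c_(m+1) = -(2m+1)/2 c_m. *)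
Fixpoint rsqrt_coef (m : nat) : R :=
  if m is m'.+1 then rsqrt_coef m' * (- (m'.*2.+1)%:R / 2) else 1.

Definition rsqrt_deriv (m : nat) (t : R) := rsqrt_coef m * rsqrt t ^+ m.*2.+1.

Lemma rsqrt_deriv0 : rsqrt_deriv 0 = rsqrt.
Proof. by apply/funext => t; rewrite /rsqrt_deriv mul1r expr1. Qed.

Lemma rsqrt_gt0 t : 0 < t -> 0 < rsqrt t.
Proof. by move=> t0; rewrite invr_gt0 sqrtr_gt0. Qed.

Lemma rsqrt_sqr t : 0 < t -> rsqrt t ^+ 2 = t^-1.
Proof. by move=> t0; rewrite exprVn sqr_sqrtr // ltW. Qed.

Lemma derive_rsqrt t : 0 < t ->
  derivable rsqrt t 1 /\ 'D_1 rsqrt t = - 2^-1 * rsqrt t ^+ 3.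
Proof.
move=> t0; have s0 : Num.sqrt t != 0 by rewrite gt_eqF // sqrtr_gt0.
have ds : derivable (@Num.sqrt R) t 1 by apply: ex_derive; apply: is_derive1_sqrt.
split; first exact: derivableV.
rewrite /rsqrt deriveV // derive_sqrt // /GRing.scale /= -exprVn !exprS expr0.
by field.
Qed.

Lemma derive_rsqrt_deriv m t : 0 < t ->
  derivable (rsqrt_deriv m) t 1 /\ 'D_1 (rsqrt_deriv m) t = rsqrt_deriv m.+1 t.
Proof.
move=> t0; have [d1 e1] := derive_rsqrt t0.
have -> : rsqrt_deriv m = (fun x => rsqrt_coef m * (rsqrt ^+ m.*2.+1) x).
  by apply/funext => x; rewrite exprfctE.
have dX : derivable (rsqrt ^+ m.*2.+1) t 1 by apply: derivableX.
split; first exact: (derivableM (derivable_cst _ _ _) dX).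
rewrite deriveMl // deriveX // e1 /rsqrt_deriv /= /GRing.scale /=.
by rewrite doubleS -[m.*2.+3]addn3 exprD; ring.
Qed.

End InverseSqrt.

Arguments rsqrt {R}.
Arguments rsqrt_deriv {R}.

Section Forms.
Variables (R : realType) (n : nat).
Local Notation V := (Cn R n).
Local Open Scope complex_scope.

Definition dotV (p q : V) : R := \sum_j (re_ p j * re_ q j + im_ p j * im_ q j).
Definition symp (p q : V) : R := \sum_j (re_ p j * im_ q j - im_ p j * re_ q j).
Definition hdot (p q : V) : R[i] := \sum_j (zc p j)^* * zc q j.

Lemma hdotE p q : hdot p q = dotV p q +i* symp p q.
Proof.
have -> : hdot p q = complex.Re (hdot p q) +i* complex.Im (hdot p q) by case: (hdot p q).
by rewrite !raddf_sum; congr (_ +i* _); apply: eq_bigr => j _ /=; ring.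
Qed.

Lemma re_ex (j k : 'I_n) : re_ (ex R j) k = (j == k)%:R.
Proof. by rewrite /re_ /ex mxE /= eq_sym. Qed.

Lemma im_ex (j k : 'I_n) : im_ (ex R j) k = 0.
Proof. by rewrite /im_ /ex mxE. Qed.

Lemma re_ey (j k : 'I_n) : re_ (ey R j) k = 0.
Proof. by rewrite /re_ /ey mxE. Qed.

Lemma im_ey (j k : 'I_n) : im_ (ey R j) k = (j == k)%:R.
Proof. by rewrite /im_ /ey mxE /= eq_sym. Qed.

Lemma dotV_ex z j : dotV z (ex R j) = re_ z j.
Proof.
rewrite /dotV (bigD1 j) //= re_ex im_ex eqxx mulr1 mulr0 addr0 big1 ?addr0 //.
by move=> k /negbTE kj; rewrite re_ex im_ex eq_sym kj mulr0 mulr0 addr0.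
Qed.

Lemma dotV_ey z j : dotV z (ey R j) = im_ z j.
Proof.
rewrite /dotV (bigD1 j) //= re_ey im_ey eqxx mulr1 mulr0 add0r big1 ?addr0 //.
by move=> k /negbTE kj; rewrite re_ey im_ey eq_sym kj mulr0 mulr0 addr0.
Qed.

Lemma sum_dzdzb_diag p q : \sum_j dzdzb j j p q = 0 +i* (-2 * symp p q).
Proof.
have -> : \sum_j dzdzb j j p q = complex.Re (\sum_j dzdzb j j p q)
  +i* complex.Im (\sum_j dzdzb j j p q) by case: (\sum_j _).
rewrite !raddf_sum /symp mulr_sumr; congr (_ +i* _).
  by apply: big1 => j _ /=; ring.
by apply: eq_bigr => j _ /=; ring.
Qed.

Lemma inv2_complex : (2%:R : R[i])^-1 = ((2%:R : R)^-1)%:C.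
Proof. by rewrite fmorphV /= rmorph_nat. Qed.

Lemma omega0E z p q : omega0 z p q = symp p q.
Proof.
by rewrite /omega0 sum_dzdzb_diag inv2_complex /real_complex_def; simpc => /=; field.
Qed.

Lemma sum_dzdzb_hdot z p q :
  \sum_j \sum_k ((zc z j)^* * zc z k) * dzdzb j k p q =
  hdot z p * (hdot z q)^* - hdot z q * (hdot z p)^*.
Proof.
rewrite /hdot !rmorph_sum !big_distrlr -sumrB; apply: eq_bigr => j _.
rewrite -sumrB; apply: eq_bigr => k _.
by rewrite /dzdzb !rmorphM /= !conjCK; ring.
Qed.

Lemma re_comb (a b : R) (u w : V) j : re_ (a *: u + b *: w) j = a * re_ u j + b * re_ w j.
Proof. by rewrite /re_ !mxE. Qed.

Lemma im_comb (a b : R) (u w : V) j : im_ (a *: u + b *: w) j = a * im_ u j + b * im_ w j.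
Proof. by rewrite /im_ !mxE. Qed.

Lemma normsqZ a (z : V) : normsq (a *: z) = a ^+ 2 * normsq z.
Proof.
rewrite /normsq mulr_sumr; apply: eq_bigr => j _.
by rewrite /re_ /im_ !mxE; ring.
Qed.

Lemma dotVZl a (z p : V) : dotV (a *: z) p = a * dotV z p.
Proof.
rewrite /dotV mulr_sumr; apply: eq_bigr => j _.
by rewrite /re_ /im_ !mxE; ring.
Qed.

Lemma sympZl a (z p : V) : symp (a *: z) p = a * symp z p.
Proof.
rewrite /symp mulr_sumr; apply: eq_bigr => j _.
by rewrite /re_ /im_ !mxE; ring.
Qed.

Lemma dotV_comb l m (u z : V) : dotV z (l *: u + m *: z) = l * dotV z u + m * normsq z.
Proof.
rewrite /dotV /normsq !mulr_sumr -big_split /=; apply: eq_bigr => j _.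
by rewrite re_comb im_comb; ring.
Qed.

Lemma symp_comb_r l m (u z : V) : symp z (l *: u + m *: z) = l * symp z u.
Proof.
rewrite /symp mulr_sumr; apply: eq_bigr => j _.
by rewrite re_comb im_comb; ring.
Qed.

Lemma symp_comb l m m' (u v z : V) :
  symp (l *: u + m *: z) (l *: v + m' *: z) =
  l ^+ 2 * symp u v + l * m * symp z v - l * m' * symp z u.
Proof.
rewrite /symp !mulr_sumr -big_split /= -sumrB; apply: eq_bigr => j _.
by rewrite !re_comb !im_comb; ring.
Qed.

Section Hessian.
Variables (phi : V -> R) (z : V) (al be : R).
Hypothesis hess : forall u v, 'D_u ('D_v phi) z = al * dotV u v + be * dotV z u * dotV z v.

Lemma wirt2_hessian j k : wirt2 phi j k z =
  (al / 2 * (j == k)%:R)%:C + (be / 4)%:C * ((zc z j)^* * zc z k).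
Proof.
rewrite /wirt2 !hess !dotV_ex !dotV_ey re_ex re_ey im_ex im_ey /zc.
rewrite /real_complex_def; simpc; rewrite eq_sym.
by congr (_ +i* _); field.
Qed.

Lemma i2ddbar_hessian p q : i2ddbar phi z p q =
  al / 2 * symp p q + be / 4 * (dotV z p * symp z q - symp z p * dotV z q).
Proof.
have sum_delta : \sum_j \sum_k (al / 2 * (j == k)%:R)%:C * dzdzb j k p q =
    (al / 2)%:C * \sum_j dzdzb j j p q.
  rewrite mulr_sumr; apply: eq_bigr => j _.
  rewrite (bigD1 j) //= eqxx mulr1 big1 ?addr0 // => k /negbTE.
  by rewrite eq_sym => ->; rewrite mulr0 mul0r.
rewrite /i2ddbar.
under eq_bigr do under eq_bigr do
  rewrite wirt2_hessian mulrDl -[_ * _ * dzdzb _ _ _ _]mulrA.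
under eq_bigr do rewrite big_split /=.
rewrite big_split /= sum_delta.
under eq_bigr do rewrite -mulr_sumr.
rewrite -mulr_sumr sum_dzdzb_hdot sum_dzdzb_diag !hdotE inv2_complex.
rewrite /real_complex_def; simpc => /=.
by field.
Qed.

End Hessian.
End Forms.

Section Derivatives.
Variables (R : realType) (n : nat).
Local Notation V := (Cn R n).

Lemma dotVl_sum (v : V) : (fun w => dotV w v) =
  \sum_j (rcoord true j * cst (re_ v j) + rcoord false j * cst (im_ v j)).
Proof. by rewrite fct_sumE. Qed.

Lemma normsq_sum : @normsq R n =
  \sum_j (rcoord true j * rcoord true j + rcoord false j * rcoord false j).
Proof. by rewrite fct_sumE; apply/funext => z; apply: eq_bigr => j _; rewrite !expr2. Qed.

Lemma normsq_ge0 (z : V) : 0 <= normsq z.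
Proof. by apply: sumr_ge0 => j _; apply: addr_ge0; apply: sqr_ge0. Qed.

Section Smooth.
Variable U : set V.
Hypothesis oU : open U.

Lemma Ck_on_dotVl k (v : V) : Ck_on U k (fun w => dotV w v).
Proof.
rewrite dotVl_sum; apply: (Ck_on_sum oU) => j.
by apply: (Ck_onD oU); apply: (Ck_onM oU); apply: Ck_on_rcoord || apply: Ck_on_cst.
Qed.

Lemma Ck_on_normsq k : Ck_on U k (@normsq R n).
Proof.
rewrite normsq_sum; apply: (Ck_on_sum oU) => j.
by apply: (Ck_onD oU); apply: (Ck_onM oU); apply: Ck_on_rcoord.
Qed.

End Smooth.

Lemma derive_dotVl (u v x : V) : 'D_u (fun w => dotV w v) x = dotV u v.
Proof.
have dc c : derivable (cst c : V -> R) x u by apply: derivable_cst.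
have dr b j : derivable (rcoord b j) x u.
  by apply: diff_derivable; apply: rcoord_differentiable.
rewrite dotVl_sum derive_sum => [|j]; last by apply: derivableD; apply: derivableM.
apply: eq_bigr => j _; rewrite deriveD; try by apply: derivableM.
rewrite !deriveM // !derive_cst !derive_rcoord !scaler0 !add0r.
by rewrite mulrC [im_ u j * _]mulrC.
Qed.

Lemma derive_normsq x v : 'D_v (@normsq R n) x = 2 * dotV x v.
Proof.
have dr b j : derivable (rcoord b j) x v.
  by apply: diff_derivable; apply: rcoord_differentiable.
rewrite normsq_sum derive_sum => [|j]; last by apply: derivableD; apply: derivableM.
rewrite /dotV mulr_sumr; apply: eq_bigr => j _.
rewrite deriveD; try by apply: derivableM.
rewrite !deriveM // !derive_rcoord -![_ *: _]/(_ * _) /rcoord /re_ /im_ /=.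
by ring.
Qed.

Lemma dotVl_differentiable (v x : V) : differentiable (fun w => dotV w v) x.
Proof. exact: (@Ck_on_differentiable _ _ setT _ 0 _ _ (Ck_on_dotVl openT 0 v)). Qed.

Lemma normsq_differentiable (x : V) : differentiable (@normsq R n) x.
Proof. exact: (@Ck_on_differentiable _ _ setT _ 0 _ _ (Ck_on_normsq openT 0)). Qed.

Definition affine_normsq (c e : R) (w : V) : R := c + e * normsq w.

Lemma Ck_on_affine_normsq (U : set V) (oU : open U) k c e :
  Ck_on U k (affine_normsq c e).
Proof.
apply: (Ck_onD oU); first exact: Ck_on_cst.
by apply: (Ck_onM oU); [apply: Ck_on_cst | apply: Ck_on_normsq].
Qed.

Lemma affine_normsq_differentiable c e x : differentiable (affine_normsq c e) x.
Proof.
exact: (@Ck_on_differentiable _ _ setT _ 0 _ _ (Ck_on_affine_normsq openT 0 c e)).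
Qed.

Lemma derive_affine_normsq c e (x v : V) :
  'D_v (affine_normsq c e) x = 2 * e * dotV x v.
Proof.
have dN : derivable (@normsq R n) x v.
  by apply: diff_derivable; apply: normsq_differentiable.
have -> : affine_normsq c e = cst c + e *: @normsq R n.
  by apply/funext => w.
rewrite deriveD; [|exact: derivable_cst|exact: derivableZ].
by rewrite deriveZ // derive_cst derive_normsq add0r -[e *: _]/(e * _) mulrCA mulrA.
Qed.

Lemma open_affine_normsq_gt0 c e : open [set w | 0 < affine_normsq c e w].
Proof.
apply: (@open_comp _ _ (affine_normsq c e) [set t | 0 < t]); last exact: open_gt.
by move=> x _; apply: differentiable_continuous; apply: affine_normsq_differentiable.
Qed.

Lemma derive_ln_affine_normsq c e (y v : V) : 0 < affine_normsq c e y ->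
  'D_v (@ln R \o affine_normsq c e) y = 2 * e * dotV y v / affine_normsq c e y.
Proof.
move=> s0; have dln := is_derive1_ln s0.
rewrite derive_comp1 ?derive_affine_normsq; last exact: ex_derive.
  by rewrite derive_val mulrC.
exact: affine_normsq_differentiable.
Qed.

Lemma derive2_ln_affine_normsq c e (y u v : V) : 0 < affine_normsq c e y ->
  let s := affine_normsq c e y in
  'D_u ('D_v (@ln R \o affine_normsq c e)) y =
  2 * e / s * dotV u v + - (4 * e ^+ 2) / s ^+ 2 * dotV y u * dotV y v.
Proof.
move=> s0 s.
have near_pos : \forall w \near y, 0 < affine_normsq c e w.
  by move: (@open_affine_normsq_gt0 c e); rewrite openE => /(_ y s0).
rewrite (@near_eq_derive _ _ _ _
  (fun w => 2 * e * dotV w v * (affine_normsq c e w)^-1)); last first.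
  by apply: filterS near_pos => w /derive_ln_affine_normsq ->.
have dS : derivable (affine_normsq c e) y u.
  by apply: diff_derivable; apply: affine_normsq_differentiable.
have dB : derivable (fun w => dotV w v) y u.
  by apply: diff_derivable; apply: dotVl_differentiable.
have s_neq0 : s != 0 by rewrite gt_eqF.
rewrite deriveM; last by apply: derivableV.
  rewrite deriveV // deriveM // derive_cst derive_dotVl derive_affine_normsq.
  by rewrite /GRing.scale /= -/s; field.
by apply: derivableM => //; apply: derivable_cst.
Qed.

Lemma i2ddbar_ln_affine_normsq c e (y p q : V) : 0 < affine_normsq c e y ->
  let s := affine_normsq c e y in
  i2ddbar (@ln R \o affine_normsq c e) y p q =
  e / s * symp p q - e ^+ 2 / s ^+ 2 * (dotV y p * symp y q - symp y p * dotV y q).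
Proof.
move=> s0 s; rewrite (i2ddbar_hessian (fun u v => derive2_ln_affine_normsq u v s0)).
have s_neq0 : s != 0 by rewrite gt_eqF.
by rewrite -/s; field.
Qed.

End Derivatives.

Section RadialScaling.
Variables (R : realType) (n : nat).
Local Notation V := (Cn R n).

(* [fball] is the case (1, -1); its inverse is the case (1, 1). *)
Definition rscale (c e : R) (z : V) : V := rsqrt (affine_normsq c e z) *: z.

Lemma rcoord_rscale c e b j (z : V) :
  rcoord b j (rscale c e z) = rsqrt (affine_normsq c e z) * rcoord b j z.
Proof. exact: rcoordZ. Qed.

Lemma fballE : @fball R n = rscale 1 (-1).
Proof. by apply/funext => z; rewrite /rscale /affine_normsq mulN1r. Qed.

Lemma Ck_on_rscale (U : set V) (oU : open U) k c e :
  (forall z, U z -> 0 < affine_normsq c e z) -> Ck_on U k (rscale c e).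
Proof.
move=> pos; apply: Ck_on_coordwise => // b j.
have Ck_r : Ck_on U k (rsqrt \o affine_normsq c e).
  rewrite -rsqrt_deriv0.
  apply: (@Ck_on_comp _ _ _ oU [set t | 0 < t]) => //.
    by move=> m t /= t0; apply: derive_rsqrt_deriv.
  exact: Ck_on_affine_normsq.
apply: Ck_on_eq (Ck_onM oU Ck_r (Ck_on_rcoord _ _ b j)) => // z _.
by rewrite [RHS]/= rcoord_rscale.
Qed.

Lemma diff_rscale c e (z u : V) : 0 < affine_normsq c e z ->
  let r := rsqrt (affine_normsq c e z) in
  'd (rscale c e) z u = r *: u + (- e * r ^+ 3 * dotV z u) *: z.
Proof.
move=> s0 r.
have dG : differentiable (rscale c e) z.
  apply: (@Ck_on_differentiable _ _ [set w | 0 < affine_normsq c e w] _ 0) => //.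
  by apply: Ck_on_rscale => //; exact: open_affine_normsq_gt0.
have dS : differentiable (affine_normsq c e) z by apply: affine_normsq_differentiable.
have [dr er] := derive_rsqrt s0.
have drS : differentiable (rsqrt \o affine_normsq c e) z.
  by apply: differentiable_comp => //; apply/derivable1_diffP.
apply: rcoordP => b j; rewrite -deriveE // -derive_rcoord_comp // rcoord_comb.
have -> : rcoord b j \o rscale c e = (rsqrt \o affine_normsq c e) * rcoord b j.
  by apply/funext => w; rewrite /= rcoord_rscale.
rewrite deriveM; [|exact: diff_derivable|apply: diff_derivable; exact: rcoord_differentiable].
rewrite derive_comp1 // er derive_affine_normsq derive_rcoord -/r.
rewrite -![_ *: _]/(_ * _) /= -/r.
by field.
Qed.

Lemma affine_normsq_rscale e (z : V) : 0 < affine_normsq 1 e z ->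
  affine_normsq 1 (- e) (rscale 1 e z) = (affine_normsq 1 e z)^-1.
Proof.
move=> s0; rewrite {1}/affine_normsq /rscale normsqZ rsqrt_sqr //.
by rewrite /affine_normsq in s0 *; field; rewrite gt_eqF.
Qed.

Lemma rscaleK e (z : V) : 0 < affine_normsq 1 e z ->
  rscale 1 (- e) (rscale 1 e z) = z.
Proof.
move=> s0; rewrite {1}/rscale affine_normsq_rscale // /rscale scalerA.
by rewrite /rsqrt sqrtrV ?ltW // invrK mulfV ?scale1r // gt_eqF ?sqrtr_gt0.
Qed.

End RadialScaling.

Section Ball.
Variables (R : realType) (n : nat).
Local Notation V := (Cn R n).

Lemma CHnE : @CHn R n = [set z | 0 < affine_normsq 1 (-1) z].
Proof. by apply/seteqP; split=> z; rewrite /= /affine_normsq mulN1r subr_gt0. Qed.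

Lemma affine_normsq_gt0 (w : V) : 0 < affine_normsq 1 1 w.
Proof. by rewrite /affine_normsq mul1r ltr_pwDl ?normsq_ge0. Qed.

Lemma special_on_fball : special_on (@CHn R n) (@fball R n).
Proof.
exists (fun j (x : 'rV[R]_n) => (Num.sqrt (1 - \sum_i x ord0 i))^-1) => z _ j.
have -> : \sum_i absq z ord0 i = normsq z by apply: eq_bigr => i _; rewrite mxE.
by rewrite /fball /re_ /im_ /= !mxE.
Qed.

Lemma diffeo_onto_fball : diffeo_onto (@CHn R n) setT (@fball R n).
Proof.
have oB : open (@CHn R n) by rewrite CHnE; exact: open_affine_normsq_gt0.
rewrite fballE; split.
  by apply: smooth_onP => k; apply: (Ck_on_rscale oB); rewrite CHnE.
exists (rscale 1 1); split.
  by apply: smooth_onP => k; apply: (Ck_on_rscale openT) => w _; apply: affine_normsq_gt0.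
rewrite CHnE; split=> [z zB|w _]; split=> //.
- have -> : rscale 1 1 = rscale 1 (- -1) :> (V -> V) by rewrite opprK.
  by rewrite rscaleK.
- by rewrite /= affine_normsq_rscale ?invr_gt0 // affine_normsq_gt0.
- by rewrite rscaleK // affine_normsq_gt0.
Qed.

Lemma pullback_fball_omega0 (z u v : V) : CHn z ->
  pullback (@fball R n) (@omega0 R n) z u v = omega_hyp z u v.
Proof.
rewrite CHnE /pullback /omega_hyp => s0.
have -> : (fun w : V => ln (1 - normsq w)) = @ln R \o affine_normsq 1 (-1).
  by apply/funext => w; rewrite /= /affine_normsq mulN1r.
rewrite fballE omega0E !diff_rscale // symp_comb.
rewrite i2ddbar_ln_affine_normsq //.
set s := affine_normsq 1 (-1) z; set r := rsqrt s.
have [r_gt0 sE] : 0 < r /\ s = (r ^+ 2)^-1 by rewrite rsqrt_sqr // invrK rsqrt_gt0.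
clearbody r; rewrite sE; field.
by rewrite gt_eqF.
Qed.

Lemma pullback_fball_omega_FS (z u v : V) : CHn z ->
  pullback (@fball R n) (@omega_FS R n) z u v = omega0 z u v.
Proof.
rewrite CHnE /pullback /omega_FS => s0.
have -> : (fun w : V => ln (1 + normsq w)) = @ln R \o affine_normsq 1 1.
  by apply/funext => w; rewrite /= /affine_normsq mul1r.
rewrite fballE omega0E !diff_rscale //.
rewrite i2ddbar_ln_affine_normsq ?affine_normsq_gt0 //.
have -> : affine_normsq 1 1 = affine_normsq 1 (- -1) :> (V -> R) by rewrite opprK.
rewrite affine_normsq_rscale //.
rewrite /rscale !dotVZl !sympZl !dotV_comb !symp_comb_r symp_comb.
have NE : normsq z = 1 - affine_normsq 1 (-1) z by rewrite /affine_normsq; ring.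
rewrite NE; set s := affine_normsq 1 (-1) z; set r := rsqrt s.
have [r_gt0 sE] : 0 < r /\ s = (r ^+ 2)^-1 by rewrite rsqrt_sqr // invrK rsqrt_gt0.
clearbody r; rewrite sE; field.
by rewrite gt_eqF.
Qed.

End Ball.

Theorem lemma2p2 (R : realType) (n : nat) :
  special_on (@CHn R n) (@fball R n) /\
  diffeo_onto (@CHn R n) setT (@fball R n) /\
  (forall z u v, @CHn R n z ->
     pullback (@fball R n) (@omega0 R n) z u v = @omega_hyp R n z u v) /\
  (forall z u v, @CHn R n z ->
     pullback (@fball R n) (@omega_FS R n) z u v = @omega0 R n z u v).
Proof.
split; first exact: special_on_fball.
split; first exact: diffeo_onto_fball.
split=> z u v; [exact: pullback_fball_omega0 | exact: pullback_fball_omega_FS].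
Qed.
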